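(* Let $m/n\in(0,1/2]$. Then the set of spans $\Gamma_n^P$ of $\ast$-orbits $P$ of $f_{m/n}$ is totally ordered by inclusion.
   Context: For $n\ge2$, $\Gamma_n\subset D^2$ is an $n$-star: a tree with edges $e_0,\dots,e_{n-1}$ of equal length, each with a valence-1 vertex at its initial point, meeting at their final points at a central vertex $v$ of valence $n$, cyclically ordered by index. For $m/n\in(0,1/2]$ in lowest terms, $f_{m/n}\colon\Gamma_n\to\Gamma_n$ is the tree map with image edge paths $f_{m/n}(e_0)=e_0\bar e_1e_1\bar e_2e_2\cdots\bar e_me_m$ and $f_{m/n}(e_r)=e_{r+_nm}$ for $r\neq0$ (here $\bar e$ is the reverse of $e$ and $+_n$ is addition mod $n$), expanding each edge uniformly away from preimages of vertices. A $\ast$-orbit is a periodic orbit $P$ of $f_{m/n}$ such that: (a) $P\neq\{v\}$; (b) $P\cap e_r\neq\emptyset$ for all $r$; (c) $f_{m/n}(P\cap e_0)\not\subseteq e_m$; (d) if $p_r$ is the point of $P\cap e_r$ closest to the initial point of $e_r$, then $f_{m/n}(p_r)=p_{r+_nm}$ for all $r\neq0$. The span $\Gamma_n^P$ of $P$ is the smallest connected subset of $\Gamma_n$ containing $P$. *)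

From HB Require Import structures.
From mathcomp Require Import all_boot all_order all_algebra.
From mathcomp Require Import reals.
Set Implicit Arguments. Unset Strict Implicit. Unset Printing Implicit Defensive.
Import Order.TTheory GRing.Theory Num.Theory.
Local Open Scope ring_scope.

(* Model of the n-star Gamma_n (all edges of length 1):
   - [None] is the central vertex v;
   - [Some (r, t)] with r < n and 0 <= t < 1 is the point of edge e_r at
     distance t from the initial (valence-1) vertex of e_r (t = 0 is that
     vertex; t -> 1 approaches v). *)
Definition point (R : realType) := option (nat * R).

Definition valid (R : realType) (n : nat) (x : point R) : Prop :=
  match x with
  | None => True
  | Some (r, t) => (r < n)%N /\ 0 <= t /\ t < 1
  end.

Definition mkpt (R : realType) (r : nat) (t : R) : point R :=
  if t < 1 then Some (r, t) else None.

Definition coord (R : realType) (x : point R) : R :=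
  match x with None => 1 | Some (_, t) => t end.

Definition in_edge (R : realType) (r : nat) (x : point R) : Prop :=
  match x with None => True | Some (r', _) => r' = r end.

Definition dist (R : realType) (x y : point R) : R :=
  match x, y with
  | Some (r, t), Some (r', t') =>
      if r == r' then `|t - t'| else (1 - t) + (1 - t')
  | _, _ => (1 - coord x) + (1 - coord y)
  end.

(* The tree map f_{m/n}.  f(e_0) = e_0 ebar_1 e_1 ... ebar_m e_m: e_0 is cut
   into 2m+1 equal pieces, piece k (0 <= k <= 2m) being mapped affinely onto
   e_0 (k = 0), onto ebar_j (k = 2j-1) or onto e_j (k = 2j, j >= 1).
   f(e_r) = e_{r + m mod n} isometrically for r <> 0; f(v) = v. *)
Definition fmn (R : realType) (m n : nat) (x : point R) : point R :=
  match x with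
  | None => None
  | Some (r, t) =>
      if r != 0%N then mkpt ((r + m) %% n) t
      else
        let s := (m.*2.+1)%:R * t in
        let k := Num.truncn s in
        let u := s - k%:R in
        if k == 0%N then mkpt 0 u
        else if odd k then mkpt k.+1./2 (1 - u)
        else mkpt k./2 u
  end.

Definition periodic_orbit (R : realType) (m n : nat) (P : point R -> Prop) :=
  exists x : point R, valid n x /\
    (exists k, (0 < k)%N /\ iter k (fmn m n) x = x) /\
    (forall y, P y <-> exists j, y = iter j (fmn m n) x).

Definition closest (R : realType) (P : point R -> Prop) (r : nat) (x : point R) :=
  P x /\ in_edge r x /\
  forall y, P y -> in_edge r y -> coord x <= coord y.

Definition star_orbit (R : realType) (m n : nat) (P : point R -> Prop) : Prop :=
  [/\ periodic_orbit m n P,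
      ~ (forall y, P y <-> y = None),
      (forall r, (r < n)%N -> exists x, P x /\ in_edge r x),
      (exists x, [/\ P x, in_edge 0 x & ~ in_edge m (fmn m n x)])
    & (forall r, (0 < r < n)%N -> forall x,
                   closest P r x -> closest P ((r + m) %% n) (fmn m n x))].

Definition open_in (R : realType) (n : nat) (U : point R -> Prop) : Prop :=
  forall x, valid n x -> U x ->
    exists2 e : R, 0 < e &
      forall y, valid n y -> dist x y < e -> U y.

Definition connected_in (R : realType) (n : nat) (A : point R -> Prop) : Prop :=
  forall U V : point R -> Prop, open_in n U -> open_in n V ->
    (forall x, A x -> U x \/ V x) ->
    (forall x, ~ [/\ A x, U x & V x]) ->
    (forall x, A x -> U x) \/ (forall x, A x -> V x).

Definition tspan (R : realType) (n : nat) (P : point R -> Prop) (y : point R) : Prop :=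
  valid n y /\
  forall A : point R -> Prop, (forall x, A x -> valid n x) ->
    connected_in n A -> (forall x, P x -> A x) -> A y.

From Pilot Require Import Defs.
From HB Require Import structures.
From mathcomp Require Import all_boot all_order all_algebra.
From mathcomp Require Import reals boolp.
From mathcomp Require Import lra zify.
Set Implicit Arguments. Unset Strict Implicit. Unset Printing Implicit Defensive.
Import Order.TTheory GRing.Theory Num.Theory.

(* For a star-orbit P the points of P closest to the initial vertices of the
   edges all lie at one common distance c_P from those vertices: condition (d)
   transports the closest point of e_r to that of e_(r+m) along the isometry
   f : e_r -> e_(r+m), and as m is coprime to n these shifts connect every
   edge to e_0.  So P lies in the star {coord >= c_P} and contains its n
   boundary points.  Every connected set containing these n points contains
   the whole star (otherwise a level set of the distance to an initial vertex
   would disconnect it), hence the span of P contains the span of any orbit Q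
   with c_P <= c_Q. *)

Lemma iter_period_mul (T : Type) (f : T -> T) (x : T) (k a : nat) :
  iter k f x = x -> iter (a * k) f x = x.
Proof. by move=> fx; rewrite iterM iter_fix. Qed.

Lemma iter_period_mod (T : Type) (f : T -> T) (x : T) (k j : nat) :
  iter k f x = x -> iter j f x = iter (j %% k) f x.
Proof. by move=> fx; rewrite {1}(divn_eq j k) addnC iterD iter_period_mul. Qed.

Lemma iter_period_fixpoint (T : Type) (f : T -> T) (v x : T) (k j : nat) :
  0 < k -> f v = v -> iter k f x = x -> iter j f x = v -> x = v.
Proof.
move=> k0 fv fx fjx; rewrite -(iter_period_mul j fx) -(subnK (leq_pmulr j k0)).
by rewrite iterD fjx iter_fix.
Qed.

Lemma coprime_mul_mod_onto (m n r : nat) :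
  coprime m n -> 0 < n -> exists j, j * m = r %[mod n].
Proof.
move=> cop n0; have [a _] := Bezoutr m n0; rewrite (eqP cop) => dv.
have r_lt := ltn_pmod r n0.
exists ((n - r %% n) * a).
have : n %| (n - r %% n) * a * m + (n - r %% n).
  by rewrite -mulnA -{2}(muln1 (n - _)) -mulnDr addnC dvdn_mull.
rewrite /dvdn => /eqP h.
rewrite -(modnDr _ n).
have -> : (n - r %% n) * a * m + n = (n - r %% n) * a * m + (n - r %% n) + r %% n.
  by lia.
by rewrite -modnDml h add0n modn_mod.
Qed.

(* [S] holds on every residue: walk back from [S 0] along r -> r - m. *)
Lemma coprime_shift_ind (m n : nat) (S : nat -> Prop) :
  coprime m n -> 0 < n -> S 0 ->
  (forall r, 0 < r < n -> S ((r + m) %% n) -> S r) ->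
  forall r, r < n -> S r.
Proof.
move=> cop n0 S0 Sstep.
have Smul : forall i, i < n -> S (((n - i) * m) %% n).
  elim=> [_|i IH lt_in]; first by rewrite subn0 modnMr.
  have ndvd : ~~ (n %| (n - i.+1) * m).
    by rewrite Gauss_dvdl 1?coprime_sym // gtnNdvd //; lia.
  apply: Sstep; first by rewrite ltn_pmod // lt0n andbT.
  rewrite modnDml addnC -mulSn (_ : (n - i.+1).+1 = n - i); last by lia.
  by apply: IH; lia.
move=> r lt_rn; have [j jm] := coprime_mul_mod_onto r cop n0.
rewrite -(modn_small lt_rn) -jm.
have [j0|j_pos] := posnP (j %% n).
  by rewrite -modnMml j0 mul0n mod0n.
rewrite -modnMml -[j %% n](subKn (ltnW (ltn_pmod j n0))); apply: Smul; lia.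
Qed.

Local Open Scope ring_scope.
Local Notation coord := Defs.coord.

Section StarGeometry.
Variables (R : realType) (n : nat).
Implicit Types (x y z b : point R) (r : nat) (c t : R).

Ltac expand_norms :=
  repeat match goal with
  | |- context [ `|?e| ] =>
      let h := fresh in
      have [h|h] := lerP 0 e; [rewrite (ger0_norm h) | rewrite (ltr0_norm h)]
  end.

Lemma dist_sym x y : dist x y = dist y x.
Proof.
case: x y => [[a s]|] [[b t]|] /=; try exact: addrC.
by rewrite eq_sym; case: eqP => _; [exact: distrC | exact: addrC].
Qed.

Lemma dist_triangle x y z : valid n x -> valid n y -> valid n z ->
  dist x z <= dist x y + dist y z.
Proof.
case: x => [[a s] [_ [? ?]]|_]; case: y => [[b t] [_ [? ?]]|_];
  case: z => [[c u] [_ [? ?]]|_] /=;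
  repeat case: eqP => ?; subst; first [congruence | expand_norms; lra].
Qed.

Lemma dist_lt_open b t : valid n b -> open_in n (fun z => dist b z < t).
Proof.
move=> vb x vx bx; exists (t - dist b x) => [|y vy xy]; first lra.
by have := dist_triangle vb vx vy; lra.
Qed.

Lemma dist_gt_open b t : valid n b -> open_in n (fun z => t < dist b z).
Proof.
move=> vb x vx bx; exists (dist b x - t) => [|y vy xy]; first lra.
by have := dist_triangle vb vy vx; rewrite (dist_sym y x); lra.
Qed.

Lemma dist_initial_inj r y z : valid n y -> valid n z -> in_edge r y ->
  dist (Some (r, 0)) z = dist (Some (r, 0)) y -> z = y.
Proof.
have dist0 c : 0 <= c -> `|0 - c| = c by move=> c0; rewrite sub0r normrN ger0_norm.
case: y => [[a s] [_ [s0 s1]]|_]; case: z => [[b u] [_ [u0 u1]]|_] //=.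
- move=> <-; rewrite eqxx; case: eqP => [-> | _]; rewrite !dist0 // => E.
    by rewrite E.
  exfalso; lra.
- by move=> <-; rewrite eqxx dist0 // => E; exfalso; lra.
- by move=> _; case: eqP => _; rewrite ?dist0 // => E; exfalso; lra.
Qed.

Lemma coord_le1 x : valid n x -> coord x <= 1.
Proof. by case: x => [[a s] [_ [_ /ltW]]|]. Qed.

Lemma mkpt_valid r t : (r < n)%N -> 0 <= t -> valid n (mkpt r t).
Proof. by move=> rn t0; rewrite /mkpt; case: ifP. Qed.

Lemma in_edge_coord r x : in_edge r x -> coord x < 1 -> x = Some (r, coord x).
Proof. by case: x => [[a s] /= -> //|_ /=]; rewrite ltxx. Qed.

Lemma dist_initial_edge r c : 0 <= c -> dist (Some (r, 0)) (Some (r, c)) = c.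
Proof. by move=> c0; rewrite /= eqxx sub0r normrN ger0_norm. Qed.

Lemma dist_initial_other r r' c : r != r' -> dist (Some (r, 0)) (Some (r', c)) = 2 - c.
Proof. by move=> /negPf /= ->; lra. Qed.

(* Separate [A] by the level sets of the distance to the initial vertex of
   the edge of [y]: the points at level [c] lie on both sides. *)
Lemma connected_star_fill A c : (1 < n)%N -> 0 <= c < 1 ->
  (forall x, A x -> valid n x) -> connected_in n A ->
  (forall r, (r < n)%N -> A (Some (r, c))) ->
  forall y, valid n y -> c <= coord y -> A y.
Proof.
move=> n1 /andP[c0 c1] Av Aconn Ac y vy cy; apply: contrapT => nAy.
pose r := if y is Some (a, _) then a else 0%N.
have yr : in_edge r y by rewrite /r; case: (y) => [[]|].
have rn : (r < n)%N by rewrite /r; case: (y) vy => [[a s] []|]; lia.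
have vb : valid n (Some (r, 0 : R)) by split; rewrite // lexx ltr01.
have dby : dist (Some (r, 0)) y = coord y.
  by case: (y) vy yr => [[a s] [_ [s0 _]] /= ->|_ _ /=]; [exact: dist_initial_edge | lra].
have cover x : A x -> dist (Some (r, 0)) x < coord y \/ coord y < dist (Some (r, 0)) x.
  move=> Ax; have vx := Av x Ax.
  have : dist (Some (r, 0)) x != coord y.
    by apply: contraPneq nAy => dx; rewrite -(dist_initial_inj vy vx yr) // dx dby.
  by rewrite neq_lt => /orP[]; [left | right].
have disjoint x : ~ [/\ A x, dist (Some (r, 0)) x < coord y & coord y < dist (Some (r, 0)) x].
  by move=> [_ ? ?]; lra.
have [Alt|Agt] :=
  Aconn _ _ (dist_lt_open (t := coord y) vb) (dist_gt_open (t := coord y) vb) cover disjoint.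
- pose r' := if r is 0 then 1%N else 0%N.
  have r'r : r != r' by rewrite /r'; case: (r).
  have r'n : (r' < n)%N by rewrite /r'; case: (r); lia.
  have := Alt _ (Ac r' r'n); rewrite dist_initial_other //.
  by have := coord_le1 vy; lra.
- by have := Agt _ (Ac r rn); rewrite dist_initial_edge //; lra.
Qed.

End StarGeometry.

Section ClosestPoints.
Variables (R : realType) (P : point R -> Prop).

Lemma exists_closest (k : nat) (e : 'I_k -> point R) r :
  (forall z, P z <-> exists j, z = e j) ->
  (exists z, P z /\ in_edge r z) -> exists x, closest P r x.
Proof.
move=> Pe [z [/Pe [j0 ->] ej0]].
have Pj0 : `[< in_edge r (e j0) >] by apply/asboolP.
case: (@arg_minP _ _ _ j0 (fun j => `[< in_edge r (e j) >]) (fun j => coord (e j)) Pj0)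
  => j /asboolP ej jmin.
exists (e j); split; [by apply/Pe; exists j | split => //].
by move=> y /Pe [j' ->] ej'; apply/jmin/asboolP.
Qed.

Lemma closest_coord_unique r x x' : closest P r x -> closest P r x' -> coord x = coord x'.
Proof.
by move=> [Px [ex minx]] [Px' [ex' minx']]; apply/eqP; rewrite eq_le minx // minx'.
Qed.

End ClosestPoints.

Section Dynamics.
Variables (R : realType) (m n : nat).
Hypothesis m_lt_n : (m < n)%N.
Local Notation f := (fmn (R := R) m n).

Lemma fmn_valid x : valid n x -> valid n (f x).
Proof.
case: x => [[r t]|] //= [rn [t0 t1]].
case: ifP => _; first by apply: mkpt_valid => //; rewrite ltn_pmod //; lia.
set s := (m.*2.+1)%:R * t.
have s0 : 0 <= s by rewrite /s mulr_ge0.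
have [sl su] := andP (truncn_itv s0).
set k := Num.truncn s in sl su *.
have k_le : (k <= m.*2)%N.
  by rewrite /k truncn_le_nat /s -[X in _ < X]mulr1 ltr_pM2l // ltr0n.
have u1 : s - k%:R <= 1 by move: su; rewrite -addn1 natrD; lra.
by case: ifP => _; [|case: ifP => _]; apply: mkpt_valid; lia || lra.
Qed.

Lemma fmn_coord r x : r != 0%N -> valid n x -> in_edge r x -> coord (f x) = coord x.
Proof. by case: x => [[a t] r0 [_ [_ t1]] /= ->|] //=; rewrite r0 /mkpt t1. Qed.

Section PeriodicOrbit.
Variable P : point R -> Prop.
Hypothesis orbitP : periodic_orbit m n P.

Lemma periodic_orbit_valid z : P z -> valid n z.
Proof.
case: orbitP => x [vx [_ Px]] /Px [j ->].
by elim: j => //= j; apply: fmn_valid.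
Qed.

Lemma periodic_orbit_finite :
  exists (k : nat) (e : 'I_k -> point R), forall z, P z <-> exists j, z = e j.
Proof.
case: orbitP => x [_ [[k [k0 fkx]] Px]].
exists k, (fun j => iter j f x) => z; rewrite Px; split=> [[j ->]|[j ->]].
  by exists (Ordinal (ltn_pmod j k0)); exact: iter_period_mod.
by exists j.
Qed.

Lemma periodic_orbit_center : P None -> forall z, P z <-> z = None.
Proof.
case: orbitP => x [_ [[k [k0 fkx]] Px]] /Px [j /esym xjv].
have xv := iter_period_fixpoint k0 (erefl : f None = None) fkx xjv; subst x.
move=> z; rewrite Px; split => [[i ->]|->]; first exact: iter_fix.
by exists 0%N.
Qed.

End PeriodicOrbit.
End Dynamics.

Section StarOrbit.
Variables (R : realType) (m n : nat).
Hypotheses (m_lt_n : (m < n)%N) (m_coprime_n : coprime m n).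
Variable P : point R -> Prop.
Hypothesis starP : star_orbit m n P.

Lemma star_orbit_level : exists c : R,
  [/\ 0 <= c < 1, (forall z, P z -> valid n z /\ c <= coord z)
    & (forall r, (r < n)%N -> P (Some (r, c)))].
Proof.
case: starP => orbitP not_center meets _ shift.
have n_gt0 : (0 < n)%N by lia.
have valid_P := periodic_orbit_valid m_lt_n orbitP.
have [k [e Pe]] := periodic_orbit_finite orbitP.
have closest_on r : (r < n)%N -> exists x, closest P r x.
  by move=> rn; apply: exists_closest Pe (meets r rn).
have coord_P z : P z -> 0 <= coord z < 1.
  case: z => [[a t] /valid_P [_ [t0 t1]]|Pv]; first exact/andP.
  by case: not_center; apply: periodic_orbit_center orbitP Pv.
have [p0 cp0] := closest_on 0%N n_gt0.
pose c := coord p0.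
have level : forall r, (r < n)%N -> forall x, closest P r x -> coord x = c.
  apply: (@coprime_shift_ind m n (fun r => forall x, closest P r x -> coord x = c)) => //.
    by move=> x cx; apply: closest_coord_unique cx cp0.
  move=> r /andP[r_gt0 rn] IH x cx; have [Px [xr _]] := cx.
  rewrite -(@fmn_coord R m n r x _ (valid_P _ Px) xr) -?lt0n //.
  by apply/IH/shift => //; rewrite r_gt0.
have c01 : 0 <= c < 1 := coord_P _ (proj1 cp0).
exists c; split => // [z Pz|r rn].
- split; first exact: valid_P.
  case: z Pz => [[r t] Pz|_]; last by case/andP: c01 => _ /ltW.
  have [rn _] := valid_P _ Pz; have [p cp] := closest_on r rn.
  by rewrite -(level r rn p cp); apply: (proj2 (proj2 cp)).
- have [p cp] := closest_on r rn; have [Pp [pr _]] := cp.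
  rewrite -(level r rn p cp) -(in_edge_coord pr) //.
  by rewrite (level r rn p cp); case/andP: c01.
Qed.

End StarOrbit.

Lemma tspan_sub (R : realType) (n : nat) (P Q : point R -> Prop) (c c' : R) :
  (1 < n)%N -> 0 <= c < 1 -> c <= c' -> (forall r, (r < n)%N -> P (Some (r, c))) ->
  (forall z, Q z -> valid n z /\ c' <= coord z) ->
  forall y, tspan n Q y -> tspan n P y.
Proof.
move=> n1 c01 cc' Pc Qc y [vy spanQ]; split => // A Av Aconn PA.
apply: spanQ => // z /Qc [vz c'z].
apply: (connected_star_fill n1 c01 Av Aconn) => [r /Pc /PA //|//|].
exact: le_trans c'z.
Qed.

Theorem lemma2p2 (R : realType) (m n : nat) :
  (0 < m)%N -> (m.*2 <= n)%N -> coprime m n ->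
  forall P Q : point R -> Prop, star_orbit m n P -> star_orbit m n Q ->
    (forall y, tspan n P y -> tspan n Q y) \/ (forall y, tspan n Q y -> tspan n P y).
Proof.
move=> m_gt0 m2_le_n cop P Q starP starQ.
have n1 : (1 < n)%N by lia.
have m_lt_n : (m < n)%N by lia.
have [cP [cP01 Plow Pc]] := star_orbit_level m_lt_n cop starP.
have [cQ [cQ01 Qlow Qc]] := star_orbit_level m_lt_n cop starQ.
have [PQ|QP] := lerP cP cQ.
- by right; apply: tspan_sub n1 cP01 PQ Pc Qlow.
- by left; apply: tspan_sub n1 cQ01 (ltW QP) Qc Plow.
Qed.
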